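(* In the setting of the context, assume every irreducible $T$-module is thin, and let $\mathbf{C}\in T$ be the unique element satisfying $$\mathbf{C}+\frac{q\mathbf{A}\mathbf{B}-q^{-1}\mathbf{B}\mathbf{A}}{q^2-q^{-2}}=\frac{(\mathbf{c}+\mathbf{c}^{-1})(\Lambda+\Lambda^{-1})+(\mathbf{a}+\mathbf{a}^{-1})(\mathbf{b}+\mathbf{b}^{-1})}{q+q^{-1}}$$ together with $\mathbf{A}+\frac{q\mathbf{B}\mathbf{C}-q^{-1}\mathbf{C}\mathbf{B}}{q^2-q^{-2}}=\frac{(\mathbf{a}+\mathbf{a}^{-1})(\Lambda+\Lambda^{-1})+(\mathbf{b}+\mathbf{b}^{-1})(\mathbf{c}+\mathbf{c}^{-1})}{q+q^{-1}}$ and $\mathbf{B}+\frac{q\mathbf{C}\mathbf{A}-q^{-1}\mathbf{A}\mathbf{C}}{q^2-q^{-2}}=\frac{(\mathbf{b}+\mathbf{b}^{-1})(\Lambda+\Lambda^{-1})+(\mathbf{c}+\mathbf{c}^{-1})(\mathbf{a}+\mathbf{a}^{-1})}{q+q^{-1}}$. Then there exists a surjective $\mathbb{C}$-algebra homomorphism $\Delta_q\to T$ sending $\mathcal{A}\mapsto\mathbf{A}$, $\mathcal{B}\mapsto\mathbf{B}$, $\mathcal{C}\mapsto\mathbf{C}$.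
   Context: The universal Askey–Wilson algebra $\Delta_q$ is the associative unital $\mathbb{C}$-algebra with generators $\mathcal{A},\mathcal{B},\mathcal{C}$ and relations asserting that each of $\mathcal{A}+\frac{q\mathcal{B}\mathcal{C}-q^{-1}\mathcal{C}\mathcal{B}}{q^2-q^{-2}}$, $\mathcal{B}+\frac{q\mathcal{C}\mathcal{A}-q^{-1}\mathcal{A}\mathcal{C}}{q^2-q^{-2}}$, $\mathcal{C}+\frac{q\mathcal{A}\mathcal{B}-q^{-1}\mathcal{B}\mathcal{A}}{q^2-q^{-2}}$ is central. Fix a nonzero $q\in\mathbb{C}$ with $q^4\neq1$. Let $\Gamma$ be a finite connected distance-regular graph (undirected, no loops or multiple edges) with vertex set $X$, distance $\partial$, diameter $D\ge3$; $V=\mathbb{C}^X$. $A$ is the adjacency matrix, $E_0,\dots,E_D$ the primitive idempotents of the Bose–Mesner algebra with $E_0=|X|^{-1}J$ and $E_1,\dots,E_D$ a $Q$-polynomial ordering; $A=\sum\theta_iE_i$. Fix a vertex $x$; $E_i^*$ is the diagonal $0/1$ matrix projecting onto vertices at distance $i$ from $x$; $A^*$ is diagonal with $(y,y)$-entry $|X|(E_1)_{xy}$, $A^*=\sum\theta_i^*E_i^*$; $T$ is the algebra generated by $A,A^*$. Assume $q$-Racah type: $\theta_i=w+uq^{2i-D}+vq^{D-2i}$, $\theta_i^*=w^*+u^*q^{2i-D}+v^*q^{D-2i}$, $u,u^*,v,v^*\neq0$; fix $a,b$ with $a^2=u/v$, $b^2=u^*/v^*$; $\mathbf{A}=(A-wI)/(av)$,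 $\mathbf{B}=(A^*-w^*I)/(bv^* )$. For an irreducible $T$-module $W\subseteq V$: endpoint $\rho=\min\{i:E_i^*W\ne0\}$, dual endpoint $\tau=\min\{i:E_iW\neq0\}$, diameter $d=|\{i:E^*_iW\ne0\}|-1$; thin means $\dim E^*_iW\le1$ for all $i$. Put $a(W)=aq^{2\tau+d-D}$, $b(W)=bq^{2\rho+d-D}$. If $W$ is thin, $(\mathbf{A}|_W,\{E_{\tau+i}|_W\}_{i=0}^d,\mathbf{B}|_W,\{E^*_{\rho+i}|_W\}_{i=0}^d)$ is a Leonard system with eigenvalues $\vartheta_i=a(W)q^{2i-d}+a(W)^{-1}q^{d-2i}$ and dual eigenvalues $\vartheta^*_i=b(W)q^{2i-d}+b(W)^{-1}q^{d-2i}$; let $\kappa=0$ if $d=0$ and, for $d\ge1$, $\kappa=a(W)b(W)^{-1}q^{d-1}+a(W)^{-1}b(W)q^{1-d}+\phi_1/((q-q^{-1})(q^d-q^{-d}))$ where $\phi_1=(\vartheta^*_0-\vartheta^*_1)(\mathrm{trace}(E^*_\rho\mathbf{A}|_W)-\vartheta_d)$; $c(W)$ is a root of $\xi^2-\kappa\xi+1=0$ (defined up to reciprocal). Isomorphism of irreducible modules: linear bijection commuting with $T$; $\Psi$ = set of types; for $\psi\in\Psi$, $a(\psi),b(\psi),d(\psi),c(\psi)$ are $a(W),b(W)$, the diameter, and (a fixed choice of) $c(W)$ for $W$ of type $\psi$. $V_\psi$ = span of irreducible modules of type $\psi$, $V=\bigoplus_\psi V_\psi$, $e_\psi$ = identity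 on $V_\psi$, $0$ on other $V_\lambda$. Define $\mathbf{a}=\sum_\psi a(\psi)e_\psi$, $\mathbf{b}=\sum_\psi b(\psi)e_\psi$, $\mathbf{c}=\sum_\psi c(\psi)e_\psi$, $\Lambda=\sum_\psi q^{d(\psi)+1}e_\psi$ (these are invertible). *)

From HB Require Import structures.
From mathcomp Require Import all_boot all_algebra.
Set Implicit Arguments.
Unset Strict Implicit.
Unset Printing Implicit Defensive.
Import GRing.Theory.
Local Open Scope ring_scope.

Section Graph.
Variable n : nat.
Variable e : rel 'I_n.

Definition simple_graph : Prop := symmetric e /\ irreflexive e.

Fixpoint ball (k : nat) (y : 'I_n) : {set 'I_n} :=
  match k with
  | 0 => [set y]
  | k'.+1 => ball k' y :|: [set z | [exists w in ball k' y, e w z]]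
  end.

Definition gdist (y z : 'I_n) : nat := find (fun k => z \in ball k y) (iota 0 n).

Definition connected_graph : Prop := forall y z : 'I_n, exists k, z \in ball k y.

Definition diameter : nat := \max_(y < n) \max_(z < n) gdist y z.

(* intersection numbers p^h_{ij} are well defined *)
Definition distance_regular : Prop :=
  forall (y z y' z' : 'I_n) (i j : nat), gdist y z = gdist y' z' ->
    #|[set w | (gdist y w == i) && (gdist z w == j)]| =
    #|[set w | (gdist y' w == i) && (gdist z' w == j)]|.

End Graph.

Section Matrices.
Variable C : fieldType.
Variable n : nat.
Variable e : rel 'I_n.

Definition adjmx : 'M[C]_n := \matrix_(y, z) (e y z)%:R.
Definition distmx (i : nat) : 'M[C]_n := \matrix_(y, z) (gdist e y z == i)%:R.

Definition bose_mesner (D : nat) (M : 'M[C]_n) : Prop :=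
  exists c : 'I_D.+1 -> C, M = \sum_(i < D.+1) c i *: distmx i.

Definition hadamard (M N : 'M[C]_n) : 'M[C]_n := \matrix_(i, j) (M i j * N i j).

Definition primitive_idempotents (D : nat) (E : 'I_D.+1 -> 'M[C]_n) : Prop :=
  [/\ (forall i, bose_mesner D (E i)),
      (forall i j, E i *m E j = if i == j then E i else 0),
      (forall i, E i != 0),
      \sum_(i < D.+1) E i = 1%:M &
      (forall i (F G : 'M[C]_n), bose_mesner D F -> bose_mesner D G ->
          F *m F = F -> G *m G = G -> F *m G = 0 -> E i = F + G ->
          F = 0 \/ G = 0)].

(* Krein parameters:  E_i o E_j = |X|^{-1} sum_h q^h_{ij} E_h *)
Definition krein (D : nat) (E : 'I_D.+1 -> 'M[C]_n) (h i j : 'I_D.+1) : C :=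
  n%:R * \tr (E h *m hadamard (E i) (E j)) / \tr (E h).

Definition Q_polynomial (D : nat) (E : 'I_D.+1 -> 'M[C]_n) : Prop :=
  forall h i j : 'I_D.+1,
    ([|| (i + j < h)%N, (h + j < i)%N | (h + i < j)%N] -> krein E h i j = 0) /\
    ([|| h == (i + j)%N :> nat, i == (h + j)%N :> nat | j == (h + i)%N :> nat] ->
       krein E h i j != 0).

Definition Est (x : 'I_n) (i : nat) : 'M[C]_n :=
  diag_mx (\row_y (gdist e x y == i)%:R).

Definition dualA (x : 'I_n) (E1 : 'M[C]_n) : 'M[C]_n :=
  diag_mx (\row_y (n%:R * E1 x y)).

Inductive inT (A As : 'M[C]_n) : 'M[C]_n -> Prop :=
| inT_A : inT A As A
| inT_As : inT A As As
| inT_1 : inT A As 1%:M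
| inT_add M N : inT A As M -> inT A As N -> inT A As (M + N)
| inT_scale (c : C) M : inT A As M -> inT A As (c *: M)
| inT_mul M N : inT A As M -> inT A As N -> inT A As (M *m N).

(* Subspaces W of V = C^n are encoded as row spaces of matrices W:
   a column vector v lies in W iff v^T <= W.  An operator M acting on
   column vectors maps W into itself iff W *m M^T <= W. *)
Definition Tmodule (A As W : 'M[C]_n) : Prop :=
  forall M, inT A As M -> (W *m M^T <= W)%MS.

Definition irr_Tmodule (A As W : 'M[C]_n) : Prop :=
  [/\ Tmodule A As W, W != 0 &
      forall U : 'M[C]_n, Tmodule A As U -> (U <= W)%MS -> U = 0 \/ (U == W)%MS].

Definition thin (x : 'I_n) (W : 'M[C]_n) : Prop :=
  forall i : nat, (\rank (W *m (Est x i)^T) <= 1)%N.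

(* isomorphism of T-modules: a linear bijection W -> W' commuting with T.
   phi acts on row vectors (v^T |-> v^T *m phi). *)
Definition Tiso (A As W W' : 'M[C]_n) : Prop :=
  exists phi : 'M[C]_n,
    [/\ (W *m phi == W')%MS, \rank (W *m phi) = \rank W &
        forall M, inT A As M -> W *m M^T *m phi = W *m phi *m M^T].

Definition endpoint (x : 'I_n) (W : 'M[C]_n) : nat :=
  find (fun i => W *m (Est x i)^T != 0) (iota 0 n).

Definition dual_endpoint (D : nat) (E : 'I_D.+1 -> 'M[C]_n) (W : 'M[C]_n) : nat :=
  find (fun i => W *m (E (inord i))^T != 0) (iota 0 D.+1).

Definition mod_diameter (x : 'I_n) (W : 'M[C]_n) : nat :=
  (count (fun i => W *m (Est x i)^T != 0) (iota 0 n)).-1.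

(* trace of the restriction M|_W of an operator M with M W <= W *)
Definition restr_trace (W M : 'M[C]_n) : C :=
  \tr (row_base W *m M^T *m pinvmx (row_base W)).

Definition acts_by (S W : 'M[C]_n) (s : C) : Prop := W *m S^T = s *: W.

Definition Abold (a v w : C) : 'M[C]_n := (a * v)^-1 *: (adjmx - w%:M).
Definition Bbold (x : 'I_n) (E1 : 'M[C]_n) (b vs ws : C) : 'M[C]_n :=
  (b * vs)^-1 *: (dualA x E1 - ws%:M).

Section ModuleParams.
Variables (q a b : C) (D : nat) (x : 'I_n) (E : 'I_D.+1 -> 'M[C]_n).

Definition aW (W : 'M[C]_n) : C :=
  a * q ^ ((2 * dual_endpoint E W + mod_diameter x W)%N%:Z - D%:Z).
Definition bW (W : 'M[C]_n) : C :=
  b * q ^ ((2 * endpoint x W + mod_diameter x W)%N%:Z - D%:Z).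

Definition kappa (Ab W : 'M[C]_n) : C :=
  let d := mod_diameter x W in
  let aw := aW W in let bw := bW W in
  let th (i : nat) := aw * q ^ ((2 * i)%N%:Z - d%:Z) + aw^-1 * q ^ (d%:Z - (2 * i)%N%:Z) in
  let ths (i : nat) := bw * q ^ ((2 * i)%N%:Z - d%:Z) + bw^-1 * q ^ (d%:Z - (2 * i)%N%:Z) in
  let phi1 := (ths 0%N - ths 1%N) * (restr_trace W (Est x (endpoint x W) *m Ab) - th d) in
  if d == 0%N then 0 else
  aw / bw * q ^ (d%:Z - 1) + bw / aw * q ^ (1 - d%:Z)
    + phi1 / ((q - q^-1) * (q ^+ d - q ^- d)).

End ModuleParams.

End Matrices.

Arguments adjmx {C n} e.
Arguments distmx {C n} e i.
Arguments Est {C n} e x i.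

(* The universal Askey-Wilson algebra Delta_q, presented as the        *)
(* quotient of the term algebra over C on generators A, B, C by the    *)
(* congruence generated by the C-algebra axioms and the relations      *)
(* "each of the three elements below is central".                      *)
Section AW.
Variable C : fieldType.

Inductive awterm : Type :=
| AWconst (c : C)
| AWA | AWB | AWC
| AWadd (s t : awterm)
| AWmul (s t : awterm).

Definition AWscale (c : C) (t : awterm) : awterm := AWmul (AWconst c) t.

Definition aw_central_elt (q : C) (X Y Z : awterm) : awterm :=
  AWadd X (AWscale ((q ^+ 2 - q ^- 2)^-1)
            (AWadd (AWscale q (AWmul Y Z)) (AWscale (- q^-1) (AWmul Z Y)))).

Inductive aw_equiv (q : C) : awterm -> awterm -> Prop :=
| awe_refl t : aw_equiv q t t
| awe_sym s t : aw_equiv q s t -> aw_equiv q t s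
| awe_trans s t u : aw_equiv q s t -> aw_equiv q t u -> aw_equiv q s u
| awe_add s s' t t' : aw_equiv q s s' -> aw_equiv q t t' ->
    aw_equiv q (AWadd s t) (AWadd s' t')
| awe_mul s s' t t' : aw_equiv q s s' -> aw_equiv q t t' ->
    aw_equiv q (AWmul s t) (AWmul s' t')
| awe_addA s t u : aw_equiv q (AWadd s (AWadd t u)) (AWadd (AWadd s t) u)
| awe_addC s t : aw_equiv q (AWadd s t) (AWadd t s)
| awe_add0 t : aw_equiv q (AWadd (AWconst 0) t) t
| awe_addN t : aw_equiv q (AWadd t (AWscale (-1) t)) (AWconst 0)
| awe_mulA s t u : aw_equiv q (AWmul s (AWmul t u)) (AWmul (AWmul s t) u)
| awe_mul1l t : aw_equiv q (AWmul (AWconst 1) t) t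
| awe_mul1r t : aw_equiv q (AWmul t (AWconst 1)) t
| awe_mulDl s t u : aw_equiv q (AWmul (AWadd s t) u) (AWadd (AWmul s u) (AWmul t u))
| awe_mulDr s t u : aw_equiv q (AWmul s (AWadd t u)) (AWadd (AWmul s t) (AWmul s u))
| awe_constD c d : aw_equiv q (AWconst (c + d)) (AWadd (AWconst c) (AWconst d))
| awe_constM c d : aw_equiv q (AWconst (c * d)) (AWmul (AWconst c) (AWconst d))
| awe_constC c t : aw_equiv q (AWmul (AWconst c) t) (AWmul t (AWconst c))
| awe_centralA t : aw_equiv q (AWmul (aw_central_elt q AWA AWB AWC) t)
                               (AWmul t (aw_central_elt q AWA AWB AWC))
| awe_centralB t : aw_equiv q (AWmul (aw_central_elt q AWB AWC AWA) t)
                               (AWmul t (aw_central_elt q AWB AWC AWA))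
| awe_centralC t : aw_equiv q (AWmul (aw_central_elt q AWC AWA AWB) t)
                               (AWmul t (aw_central_elt q AWC AWA AWB)).

(* A C-algebra homomorphism Delta_q -> 'M_n, given on representatives:
   it is well defined on the quotient and preserves the operations. *)
Definition aw_hom (q : C) (n : nat) (f : awterm -> 'M[C]_n) : Prop :=
  [/\ (forall s t, aw_equiv q s t -> f s = f t),
      (forall c, f (AWconst c) = c%:M),
      (forall s t, f (AWadd s t) = f s + f t) &
      (forall s t, f (AWmul s t) = f s *m f t)].

End AW.

From HB Require Import structures.
From mathcomp Require Import all_boot all_algebra sesquilinear spectral.
From mathcomp Require Import reals complex.
From Stdlib Require Import Classical.
Set Implicit Arguments.
Unset Strict Implicit.
Unset Printing Implicit Defensive.
Import GRing.Theory Num.Theory Num.Def.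
Local Open Scope ring_scope.

(* The adjacency matrix A is real symmetric, and so is the dual adjacency
   matrix A*, because the primitive idempotents of the Bose-Mesner algebra are
   real.  Hence T is closed under conjugate transposition, the orthogonal
   complement of a T-submodule is a T-submodule, and V is an orthogonal sum of
   irreducible T-modules.  An operator acting as a scalar on every irreducible
   T-module therefore commutes with T; this applies to a, b, c, Lambda and to
   the right-hand sides of the three relations.  So evaluating Delta_q at
   (A, B, C) kills the defining relations, since the would-be central elements
   go to matrices commuting with T, which contains the whole image; and it is
   onto T since A and A* are affine in the normalized generators. *)

Section GraphDistance.
Variables (n : nat) (e : rel 'I_n).
Hypothesis e_sym : symmetric e.

Lemma ballS k y z :
  (z \in ball e k.+1 y) = (z \in ball e k y) || [exists w in ball e k y, e w z].
Proof. by rewrite [ball e k.+1 y]/= !inE. Qed.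

Lemma ball_step k y y' z : z \in ball e k y -> e y' y -> z \in ball e k.+1 y'.
Proof.
elim: k z => [|k IHk] z.
  rewrite [ball e 0 y]/= inE => /eqP -> ey'y; rewrite ballS.
  by apply/orP; right; apply/existsP; exists y'; rewrite [ball e 0 y']/= inE eqxx.
rewrite ballS => /orP [zk|/existsP [w /andP [wk ewz]]] ey'y; rewrite ballS.
  by rewrite IHk.
by apply/orP; right; apply/existsP; exists w; rewrite ewz IHk.
Qed.

Lemma ball_sym k y z : (z \in ball e k y) = (y \in ball e k z).
Proof.
suff ball_symW k' y' z' : z' \in ball e k' y' -> y' \in ball e k' z'.
  by apply/idP/idP; apply: ball_symW.
elim: k' y' z' => [|k' IHk] y' z'; first by rewrite [ball e 0 _]/= !inE eq_sym.
rewrite ballS => /orP [zk|/existsP [w /andP [wk ewz]]].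
  by rewrite ballS IHk.
by apply: ball_step (IHk _ _ wk) _; rewrite e_sym.
Qed.

Lemma gdist_sym y z : gdist e y z = gdist e z y.
Proof. by apply: eq_find => k; rewrite ball_sym. Qed.

End GraphDistance.

Section BoseMesnerBasis.
Variables (C : fieldType) (n : nat) (e : rel 'I_n) (D : nat).
Variable E : 'I_D.+1 -> 'M[C]_n.
Hypothesis E_prim : primitive_idempotents e E.

Lemma mulmx_suml_idempotents (d : 'I_D.+1 -> C) j :
  (\sum_i d i *: E i) *m E j = d j *: E j.
Proof.
have [_ E_orth _ _ _] := E_prim.
rewrite mulmx_suml (bigD1 j) //= big1 ?addr0 => [|i /negbTE neq_ij].
  by rewrite -scalemxAl E_orth eqxx.
by rewrite -scalemxAl E_orth neq_ij scaler0.
Qed.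

Lemma mulmx_sumr_idempotents (d : 'I_D.+1 -> C) j :
  E j *m (\sum_i d i *: E i) = d j *: E j.
Proof.
have [_ E_orth _ _ _] := E_prim.
rewrite mulmx_sumr (bigD1 j) //= big1 ?addr0 => [|i /negbTE neq_ij].
  by rewrite -scalemxAr E_orth eqxx.
by rewrite -scalemxAr E_orth eq_sym neq_ij scaler0.
Qed.

Definition mxvec_stack (F : 'I_D.+1 -> 'M[C]_n) : 'M[C]_(D.+1, n * n) :=
  \matrix_i mxvec (F i).

Lemma mul_mxvec_stack F (y : 'rV[C]_D.+1) :
  y *m mxvec_stack F = mxvec (\sum_i y 0 i *: F i).
Proof.
rewrite mulmx_sum_row linear_sum; apply: eq_bigr => i _.
by rewrite linearZ rowK.
Qed.

Lemma bose_mesner_mxvec F :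
  bose_mesner e D F -> (mxvec F <= mxvec_stack (distmx e))%MS.
Proof.
move=> [c ->]; apply/submxP; exists (\row_i c i).
by rewrite mul_mxvec_stack; congr mxvec; apply: eq_bigr => i _; rewrite mxE.
Qed.

Lemma row_free_idempotents : row_free (mxvec_stack E).
Proof.
have [_ _ E_neq0 _ _] := E_prim.
apply: inj_row_free => y; rewrite mul_mxvec_stack -(linear0 (@mxvec C n n)).
move=> /(can_inj mxvecK) y0.
apply/rowP => k; have := mulmx_suml_idempotents (y 0) k.
rewrite y0 mul0mx => /esym/eqP; rewrite scaler_eq0 (negbTE (E_neq0 k)) orbF.
by rewrite mxE => /eqP.
Qed.

(* D+1 independent matrices inside the span of the D+1 distance matrices. *)
Lemma bose_mesner_span F :
  bose_mesner e D F -> exists d : 'I_D.+1 -> C, F = \sum_i d i *: E i.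
Proof.
have [E_bm _ _ _ _] := E_prim.
move=> F_bm.
have sub_EA : (mxvec_stack E <= mxvec_stack (distmx e))%MS.
  by apply/row_subP => i; rewrite rowK bose_mesner_mxvec.
have sub_AE : (mxvec_stack (distmx e) <= mxvec_stack E)%MS.
  have [_ <-] := mxrank_leqif_sup sub_EA.
  rewrite eqn_leq mxrankS //= (eqnP row_free_idempotents).
  exact: rank_leq_row.
have /submxP [y Fy] := submx_trans (bose_mesner_mxvec F_bm) sub_AE.
by exists (y 0); apply: (can_inj mxvecK); rewrite Fy mul_mxvec_stack.
Qed.

End BoseMesnerBasis.

Section ConjugateTranspose.
Variable C : numClosedFieldType.
Local Open Scope sesquilinear_scope.

Lemma trmxC_mul m n p (M : 'M[C]_(m, n)) (N : 'M[C]_(n, p)) :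
  (M *m N)^t* = N^t* *m M^t*.
Proof. by rewrite trmx_mul map_mxM. Qed.

Lemma mulmx_trmxC_eq0 m n (M : 'M[C]_(m, n)) : M *m M^t* = 0 -> M = 0.
Proof.
move=> MM0; apply/eqP; rewrite -submx0 -(orthomx_ortho_disj M).
by rewrite sub_capmx submx_refl orthomx1E; apply/eqP.
Qed.

End ConjugateTranspose.

Section RealIdempotents.
Variables (C : numClosedFieldType) (n : nat) (e : rel 'I_n) (D : nat).
Variable E : 'I_D.+1 -> 'M[C]_n.
Hypotheses (e_sym : symmetric e) (E_prim : primitive_idempotents e E).
Local Open Scope sesquilinear_scope.

Lemma trmx_bose_mesner (F : 'M[C]_n) : bose_mesner e D F -> F^T = F.
Proof.
move=> [c ->]; rewrite linear_sum; apply: eq_bigr => i _.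
by rewrite linearZ; congr (_ *: _); apply/matrixP => y z; rewrite !mxE gdist_sym.
Qed.

Lemma conj_bose_mesner (F : 'M[C]_n) : bose_mesner e D F -> bose_mesner e D (map_mx conjC F).
Proof.
move=> [c ->]; exists (fun i => (c i)^*); rewrite raddf_sum; apply: eq_bigr => i _.
apply/matrixP => y z; rewrite !mxE.
by case: (gdist e y z == i); rewrite ?mulr1 ?mulr0 ?raddf0.
Qed.

(* [F := map_mx conjC (E k)] is in the Bose-Mesner algebra, so [E k *m F = d *: E k];
   [d <> 0] because [E k *m F = E k *m (E k)^t*], hence [d = 1], and conjugating
   [F *m E k = E k] gives [E k *m F = F]. *)
Lemma conj_idempotent k : map_mx conjC (E k) = E k.
Proof.
have [E_bm E_orth E_neq0 _ _] := E_prim.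
have [d Fd] := bose_mesner_span E_prim (conj_bose_mesner (E_bm k)).
set F := map_mx conjC (E k) in Fd *.
have FE : F *m E k = d k *: E k by rewrite Fd (mulmx_suml_idempotents E_prim).
have EF : E k *m F = d k *: E k by rewrite Fd (mulmx_sumr_idempotents E_prim).
have scaleEK c c' : c *: E k = c' *: E k -> c = c'.
  move/eqP; rewrite -subr_eq0 -scalerBl scaler_eq0 (negbTE (E_neq0 k)) orbF.
  by rewrite subr_eq0 => /eqP.
have dk_neq0 : d k != 0.
  apply: contraNneq (E_neq0 k) => dk0; apply/eqP/mulmx_trmxC_eq0.
  rewrite -map_trmx (trmx_bose_mesner (conj_bose_mesner (E_bm k))).
  by change (E k *m F = 0); rewrite EF dk0 scale0r.
have dk1 : d k = 1.
  apply: (mulIf dk_neq0); rewrite mul1r; apply: scaleEK.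
  have FF : F *m F = F by rewrite -map_mxM E_orth eqxx.
  by rewrite -scalerA -EF scalemxAl -EF -mulmxA FF.
have EF_F : E k *m F = F by rewrite -[E k in LHS](map_mxCK (E k)) -map_mxM FE dk1 scale1r.
by rewrite -EF_F EF dk1 scale1r.
Qed.

End RealIdempotents.

Section TModules.
Variables (C : fieldType) (n : nat) (A As : 'M[C]_n).

Lemma inT_shift M c : inT A As M -> inT A As (M - c%:M).
Proof. by move=> TM; rewrite -scalemx1 -scaleNr; apply/inT_add/inT_scale/inT_1. Qed.

Definition centralT (X : 'M[C]_n) : Prop := forall M, inT A As M -> comm_mx X M.

Lemma centralTD X Y : centralT X -> centralT Y -> centralT (X + Y).
Proof. by move=> cX cY M TM; apply/comm_mx_sym/comm_mxD; apply/comm_mx_sym; auto. Qed.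

Lemma centralTM X Y : centralT X -> centralT Y -> centralT (X *m Y).
Proof. by move=> cX cY M TM; apply/comm_mx_sym/comm_mxM; apply/comm_mx_sym; auto. Qed.

Lemma centralTZ c X : centralT X -> centralT (c *: X).
Proof. by move=> cX M TM; rewrite /comm_mx -scalemxAl cX // scalemxAr. Qed.

Lemma centralTV X : centralT X -> centralT (invmx X).
Proof.
move=> cX M TM; have [X_unit|/invmx_out ->] := boolP (X \in unitmx); last exact: cX.
rewrite /comm_mx -{1}(mulmxK X_unit (invmx X *m M)) -(mulmxA _ M) -(cX M TM).
by rewrite mulmxA mulVmx // mul1mx.
Qed.

Lemma Tmodule_cap U V : Tmodule A As U -> Tmodule A As V -> Tmodule A As (U :&: V)%MS.
Proof.
move=> TU TV M TM; rewrite sub_capmx.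
by rewrite (submx_trans _ (TU M TM)) ?(submx_trans _ (TV M TM)) ?submxMr ?capmxSl ?capmxSr.
Qed.

Lemma centralT_aw_rhs c X Y Z U :
  centralT X -> centralT Y -> centralT Z -> centralT U ->
  centralT (c *: ((X + invmx X) *m (Y + invmx Y) + (Z + invmx Z) *m (U + invmx U))).
Proof.
by move=> *; apply/centralTZ/centralTD; apply/centralTM; apply/centralTD => //;
  apply/centralTV.
Qed.

Definition commT_on (X : 'M[C]_n) m (U : 'M[C]_(m, n)) : Prop :=
  forall M, inT A As M -> U *m (M *m X)^T = U *m (X *m M)^T.

Lemma commT_onS X m1 m2 (U : 'M_(m1, n)) (V : 'M_(m2, n)) :
  (U <= V)%MS -> commT_on X V -> commT_on X U.
Proof. by move=> /submxP [Y ->] cV M TM; rewrite -!mulmxA cV. Qed.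

Lemma commT_on_adds X (U V : 'M_n) :
  commT_on X U -> commT_on X V -> commT_on X (U + V)%MS.
Proof.
move=> cU cV; apply: (@commT_onS _ _ _ _ (col_mx U V)); first by rewrite addsmxE.
by move=> M TM; rewrite !mul_col_mx cU ?cV.
Qed.

Lemma commT_on_acts_by X (U : 'M_n) s :
  Tmodule A As U -> acts_by X U s -> commT_on X U.
Proof.
move=> TU XU M TM; have /submxP [Y UM] := TU M TM.
by rewrite !trmx_mul !mulmxA XU -!scalemxAl UM -mulmxA XU scalemxAr.
Qed.

End TModules.

Section CompleteReducibility.
Variables (C : numClosedFieldType) (n : nat) (A As : 'M[C]_n).
Local Open Scope sesquilinear_scope.
Local Notation "U ^!" := (orthomx conjC (hermitian1mx _) U) : matrix_set_scope.
Hypotheses (A_herm : A^t* = A) (As_herm : As^t* = As).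

Lemma inT_trmxC M : inT A As M -> inT A As (M^t*).
Proof.
elim=> [|||M1 M2 _ TM1 _ TM2|c M1 _ TM1|M1 M2 _ TM1 _ TM2].
- by rewrite A_herm; apply: inT_A.
- by rewrite As_herm; apply: inT_As.
- by rewrite trmx1 map_mx1; apply: inT_1.
- by rewrite linearD map_mxD; apply: inT_add.
- by rewrite linearZ map_mxZ; apply: inT_scale.
- by rewrite trmxC_mul; apply: inT_mul.
Qed.

Lemma Tmodule_ortho U : Tmodule A As U -> Tmodule A As U^!%MS.
Proof.
move=> TU M TM; have /submxP [Y UM] := TU _ (inT_trmxC TM).
have MU : M^T *m U^t* = U^t* *m Y^t*.
  have -> : M^T = ((M^t*)^T)^t* by rewrite trmxK map_mxCK.
  by rewrite -trmxC_mul UM trmxC_mul.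
rewrite orthomx1E -mulmxA MU mulmxA.
by move: (submx_refl U^!%MS); rewrite orthomx1E => /eqP ->; rewrite mul0mx.
Qed.

Lemma sub_adds_orthoI (U U' : 'M[C]_n) : (U' <= U)%MS -> (U <= U' + U'^! :&: U)%MS.
Proof.
move=> sU'U; rewrite (matrix_modl _ sU'U) sub_capmx submx_refl andbT.
by rewrite (addsmx_ortho U') submx1.
Qed.

Lemma proper_Tsubmodule U : Tmodule A As U -> U != 0 -> ~ irr_Tmodule A As U ->
  exists2 U', Tmodule A As U' & U' != 0 /\ (U' < U)%MS.
Proof.
move=> TU U_neq0 redU; apply: NNPP => no_sub; apply: redU; split=> // U' TU' sU'U.
have [->|U'_neq0] := eqVneq U' 0; [by left | right].
apply/negPn/negP => U'_neqU; apply: no_sub; exists U' => //.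
by rewrite ltmxEneq (negbTE U'_neqU) sU'U.
Qed.

Variable X : 'M[C]_n.
Hypothesis X_scalar : forall W, irr_Tmodule A As W -> exists s, acts_by X W s.

(* Split off an orthogonal complement and induct on the rank. *)
Lemma commT_on_Tmodule U : Tmodule A As U -> commT_on A As X U.
Proof.
have [k] := ubnP (\rank U); elim: k U => // k IHk U /ltnSE rankU TU.
have [-> M _|U_neq0] := eqVneq U 0; first by rewrite !mul0mx.
have [irrU|redU] := classic (irr_Tmodule A As U).
  by have [s XU] := X_scalar irrU; apply: commT_on_acts_by TU XU.
have [U' TU' [U'_neq0 ltU'U]] := proper_Tsubmodule TU U_neq0 redU.
have ltU'oU : (U'^! :&: U < U)%MS.
  rewrite ltmxE capmxSr sub_capmx submx_refl andbT /=.
  apply: contra U'_neq0 => sUU'o; rewrite -submx0 -(orthomx_ortho_disj U').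
  by rewrite sub_capmx submx_refl (submx_trans (ltmxW ltU'U)).
apply: commT_onS (sub_adds_orthoI (ltmxW ltU'U)) _; apply: commT_on_adds.
  by apply: IHk TU'; apply: leq_trans (rank_ltmx ltU'U) rankU.
apply: IHk (Tmodule_cap (Tmodule_ortho TU') TU).
exact: leq_trans (rank_ltmx ltU'oU) rankU.
Qed.

Lemma centralT_of_acts_by : centralT A As X.
Proof.
move=> M TM; have := commT_on_Tmodule (fun N _ => submx1 (1%:M *m N^T)) TM.
by rewrite !mul1mx => /(congr1 trmx); rewrite !trmxK.
Qed.

End CompleteReducibility.

Section AskeyWilsonEvaluation.
Variables (C : fieldType) (n : nat) (q : C) (Ab Bb Cb : 'M[C]_n).

Fixpoint aw_eval (t : awterm C) : 'M[C]_n :=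
  match t with
  | AWconst c => c%:M
  | AWA => Ab | AWB => Bb | AWC => Cb
  | AWadd s t => aw_eval s + aw_eval t
  | AWmul s t => aw_eval s *m aw_eval t
  end.

Lemma aw_eval_central X Y Z :
  aw_eval (aw_central_elt q X Y Z) = aw_eval X + (q ^+ 2 - q ^- 2)^-1 *:
    (q *: (aw_eval Y *m aw_eval Z) - q^-1 *: (aw_eval Z *m aw_eval Y)).
Proof. by rewrite /= !mul_scalar_mx scaleNr. Qed.

Lemma aw_hom_eval :
  (forall t, comm_mx (aw_eval (aw_central_elt q (AWA _) (AWB _) (AWC _))) (aw_eval t)) ->
  (forall t, comm_mx (aw_eval (aw_central_elt q (AWB _) (AWC _) (AWA _))) (aw_eval t)) ->
  (forall t, comm_mx (aw_eval (aw_central_elt q (AWC _) (AWA _) (AWB _))) (aw_eval t)) ->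
  aw_hom q aw_eval.
Proof.
move=> centralA centralB centralC; split=> // s t; elim=> {s t} /=.
- by [].
- by move=> s t _ ->.
- by move=> s t u _ -> _ ->.
- by move=> s s' t t' _ -> _ ->.
- by move=> s s' t t' _ -> _ ->.
- by move=> s t u; rewrite addrA.
- by move=> s t; rewrite addrC.
- by move=> t; rewrite raddf0 add0r.
- by move=> t; rewrite mul_scalar_mx scaleN1r subrr raddf0.
- by move=> s t u; rewrite mulmxA.
- by move=> t; rewrite mul1mx.
- by move=> t; rewrite mulmx1.
- by move=> s t u; rewrite mulmxDl.
- by move=> s t u; rewrite mulmxDr.
- by move=> c d; rewrite raddfD.
- by move=> c d; rewrite scalar_mxM.
- by move=> c t; rewrite scalar_mxC.
- exact: centralA.
- exact: centralB.
- exact: centralC.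
Qed.

Variables A As : 'M[C]_n.

Lemma aw_eval_inT :
  inT A As Ab -> inT A As Bb -> inT A As Cb -> forall t, inT A As (aw_eval t).
Proof.
move=> TA TB TC; elim=> [c||||s Ts t Tt|s Ts t Tt] //=.
- by rewrite -scalemx1; apply/inT_scale/inT_1.
- exact: inT_add.
- exact: inT_mul.
Qed.

Lemma aw_eval_onto :
  (exists sA, aw_eval sA = A) -> (exists sAs, aw_eval sAs = As) ->
  forall M, inT A As M -> exists t, aw_eval t = M.
Proof.
move=> [sA <-] [sAs <-] M.
elim=> [|||M1 M2 _ [s1 <-] _ [s2 <-]|c M1 _ [s1 <-]|M1 M2 _ [s1 <-] _ [s2 <-]].
- by exists sA.
- by exists sAs.
- by exists (AWconst 1).
- by exists (AWadd s1 s2).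
- by exists (AWmul (AWconst c) s1); rewrite /= mul_scalar_mx.
- by exists (AWmul s1 s2).
Qed.

End AskeyWilsonEvaluation.

Lemma sqrf_eq_div_neq0 (F : fieldType) (a u v : F) :
  a ^+ 2 = u / v -> u != 0 -> v != 0 -> a != 0.
Proof.
move=> a2 u_neq0 v_neq0; apply: contra_neq (mulf_neq0 u_neq0 (invr_neq0 v_neq0)).
by move=> a0; rewrite -a2 a0 expr0n.
Qed.

Lemma scalar_mx_normalize (C : fieldType) n (M : 'M[C]_n) c w :
  c != 0 -> c%:M *m (c^-1 *: (M - w%:M)) + w%:M = M.
Proof. by move=> c_neq0; rewrite mul_scalar_mx scalerA mulfV // scale1r subrK. Qed.

Section HermitianGenerators.
Variables (C : numClosedFieldType) (n : nat).
Local Open Scope sesquilinear_scope.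

Lemma adjmx_trmxC (e : rel 'I_n) : symmetric e -> (adjmx e : 'M[C]_n)^t* = adjmx e.
Proof. by move=> e_sym; apply/matrixP => y z; rewrite !mxE conjC_nat e_sym. Qed.

Lemma dualA_trmxC x (E1 : 'M[C]_n) : map_mx conjC E1 = E1 -> (dualA x E1)^t* = dualA x E1.
Proof.
move=> E1_real; apply/matrixP => y z; rewrite !mxE eq_sym.
case: eqP => [->|_]; last by rewrite mulr0n conjC0.
by rewrite !mulr1n rmorphM /= conjC_nat -[E1 in RHS]E1_real mxE.
Qed.

End HermitianGenerators.

Unset Implicit Arguments.

(* The field C of complex numbers is R[i] for R : realType. *)
Theorem theorem5p14 (R : realType) (n : nat) (e : rel 'I_n) (D : nat) (x : 'I_n)
    (E : 'I_D.+1 -> 'M[R[i]]_n)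
    (q u v w us vs ws a b : R[i])
    (abf bbf cbf Lam Cb : 'M[R[i]]_n) :
  simple_graph e -> connected_graph e -> distance_regular e ->
  D = diameter e -> (3 <= D)%N ->
  q != 0 -> q ^+ 4 != 1 ->
  primitive_idempotents e E ->
  E ord0 = (n%:R)^-1 *: const_mx 1 ->
  Q_polynomial E ->
  u != 0 -> v != 0 -> us != 0 -> vs != 0 ->
  adjmx e = \sum_(i < D.+1)
      (w + u * q ^ ((2 * i)%N%:Z - D%:Z) + v * q ^ (D%:Z - (2 * i)%N%:Z)) *: E i ->
  dualA x (E (inord 1)) = \sum_(i < D.+1)
      (ws + us * q ^ ((2 * i)%N%:Z - D%:Z) + vs * q ^ (D%:Z - (2 * i)%N%:Z)) *: Est e x i ->
  a ^+ 2 = u / v -> b ^+ 2 = us / vs ->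
  let A := adjmx e in
  let As := dualA x (E (inord 1)) in
  let Ab := Abold e a v w in
  let Bb := Bbold x (E (inord 1)) b vs ws in
  (forall W, irr_Tmodule A As W -> thin e x W) ->
  (* \mathbf{a} = sum_psi a(psi) e_psi *)
  (forall W, irr_Tmodule A As W -> acts_by abf W (aW e q a x E W)) ->
  (* \mathbf{b} = sum_psi b(psi) e_psi *)
  (forall W, irr_Tmodule A As W -> acts_by bbf W (bW e q b D x W)) ->
  (* Lambda = sum_psi q^{d(psi)+1} e_psi *)
  (forall W, irr_Tmodule A As W -> acts_by Lam W (q ^+ (mod_diameter e x W).+1)) ->
  (* \mathbf{c} = sum_psi c(psi) e_psi, c(psi) a fixed root of xi^2 - kappa xi + 1 *)
  (forall W, irr_Tmodule A As W ->
     exists xi, acts_by cbf W xi /\ xi ^+ 2 - kappa e q a b x E Ab W * xi + 1 = 0) ->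
  (forall W W' xi xi', irr_Tmodule A As W -> irr_Tmodule A As W' -> Tiso A As W W' ->
     acts_by cbf W xi -> acts_by cbf W' xi' -> xi = xi') ->
  inT A As Cb ->
  Cb + (q ^+ 2 - q ^- 2)^-1 *: (q *: (Ab *m Bb) - q^-1 *: (Bb *m Ab)) =
    (q + q^-1)^-1 *: ((cbf + invmx cbf) *m (Lam + invmx Lam)
                      + (abf + invmx abf) *m (bbf + invmx bbf)) ->
  Ab + (q ^+ 2 - q ^- 2)^-1 *: (q *: (Bb *m Cb) - q^-1 *: (Cb *m Bb)) =
    (q + q^-1)^-1 *: ((abf + invmx abf) *m (Lam + invmx Lam)
                      + (bbf + invmx bbf) *m (cbf + invmx cbf)) ->
  Bb + (q ^+ 2 - q ^- 2)^-1 *: (q *: (Cb *m Ab) - q^-1 *: (Ab *m Cb)) =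
    (q + q^-1)^-1 *: ((bbf + invmx bbf) *m (Lam + invmx Lam)
                      + (cbf + invmx cbf) *m (abf + invmx abf)) ->
  exists f : awterm R[i] -> 'M[R[i]]_n,
    [/\ aw_hom q f,
        [/\ f (AWA _) = Ab, f (AWB _) = Bb & f (AWC _) = Cb],
        (forall s, inT A As (f s)) &
        (forall M, inT A As M -> exists s, f s = M)].
Proof.
move=> [e_sym _] _ _ _ _ _ _ E_prim _ _ u_neq0 v_neq0 us_neq0 vs_neq0 _ _ a2 b2
  A As Ab Bb _ abf_scalar bbf_scalar Lam_scalar cbf_scalar _ TCb relC relA relB.
have A_herm := adjmx_trmxC R[i] e_sym.
have As_herm := dualA_trmxC x (conj_idempotent e_sym E_prim (inord 1)).
have central_of_scalar X s :
    (forall W, irr_Tmodule A As W -> acts_by X W (s W)) -> centralT A As X.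
  by move=> X_s; apply: (@centralT_of_acts_by _ _ A As A_herm As_herm) => W /X_s; exists (s W).
have central_cbf : centralT A As cbf.
  apply: (@centralT_of_acts_by _ _ A As A_herm As_herm) => W /cbf_scalar [xi [cbf_xi _]].
  by exists xi.
have central_abf : centralT A As abf := central_of_scalar _ _ abf_scalar.
have central_bbf : centralT A As bbf := central_of_scalar _ _ bbf_scalar.
have central_Lam : centralT A As Lam := central_of_scalar _ _ Lam_scalar.
have TAb : inT A As Ab by apply/inT_scale/inT_shift/inT_A.
have TBb : inT A As Bb by apply/inT_scale/inT_shift/inT_As.
have T_eval := aw_eval_inT TAb TBb TCb.
exists (aw_eval Ab Bb Cb); split=> //.
- apply: aw_hom_eval => t; rewrite aw_eval_central ?relA ?relB ?relC;
    by apply: (@centralT_aw_rhs _ _ A As).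
- apply: aw_eval_onto.
  + exists (AWadd (AWscale (a * v) (AWA _)) (AWconst w)).
    by apply: scalar_mx_normalize; rewrite mulf_neq0 ?(sqrf_eq_div_neq0 a2).
  + exists (AWadd (AWscale (b * vs) (AWB _)) (AWconst ws)).
    by apply: scalar_mx_normalize; rewrite mulf_neq0 ?(sqrf_eq_div_neq0 b2).
Qed.
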